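(* Let $K$ be a field, $\nu$ a valuation on $K[x]$, and $\mathbf{Q}\subseteq K[x]$ a set of nonconstant monic polynomials with the following properties: (1) $\nu_Q$ is a valuation on $K[x]$ for every $Q\in\mathbf{Q}$; (2) for every finite nonempty subset $\mathcal{F}\subseteq\mathbf{Q}$ there exists $Q\in\mathcal{F}$ such that $\nu_Q(Q')=\nu(Q')$ for every $Q'\in\mathcal{F}$; (3) for every $p\in K[x]$ there exist $a_1,\ldots,a_r\in K$ and $\lambda_1,\ldots,\lambda_r\in\mathbb{N}^{\mathbf{Q}}$ such that $p=\sum_{i=1}^r a_i\mathbf{Q}^{\lambda_i}$ with $\nu(a_i\mathbf{Q}^{\lambda_i})\geq\nu(p)$ for every $i$, and $\deg(Q)\leq\deg(p)$ for every $Q\in\mathbf{Q}$ with $\lambda_i(Q)\neq 0$ for some $i$. Then $\mathbf{Q}$ is a complete set for $\nu$.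
   Context: A valuation on a commutative ring $R$ is a map $\nu:R\to\Gamma\cup\{\infty\}$, $\Gamma$ an ordered abelian group, with $\nu(ab)=\nu(a)+\nu(b)$, $\nu(a+b)\geq\min\{\nu(a),\nu(b)\}$, $\nu(1)=0$, $\nu(0)=\infty$ (nonzero elements may have value $\infty$). For a nonconstant monic $q\in K[x]$ and $f\in K[x]$, the $q$-expansion of $f$ is the unique expression $f=f_0+f_1q+\cdots+f_nq^n$ with each $f_i=0$ or $\deg(f_i)<\deg(q)$; the $q$-truncation of $\nu$ is $\nu_q(f):=\min_{0\leq i\leq n}\nu(f_iq^i)$. A set $\mathbf{Q}$ of nonconstant monic polynomials in $K[x]$ is a complete set for $\nu$ if for every nonconstant $p\in K[x]$ there exists $q\in\mathbf{Q}$ with $\deg(q)\leq\deg(p)$ and $\nu(p)=\nu_q(p)$. $\mathbb{N}^{\mathbf{Q}}$ denotes the set of maps $\lambda:\mathbf{Q}\to\mathbb{N}$ with $\lambda(q)=0$ for all but finitely many $q$, and $\mathbf{Q}^\lambda:=\prod_{q\in\mathbf{Q}}q^{\lambda(q)}$. *)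

From HB Require Import structures.
From mathcomp Require Import all_boot all_order all_algebra.
Set Implicit Arguments. Unset Strict Implicit. Unset Printing Implicit Defensive.
Import Order.TTheory GRing.Theory Num.Theory.
Local Open Scope ring_scope.

Definition ordered_group (G : porderZmodType) : Prop :=
  (forall x y : G, (x <= y) || (y <= x)) /\
  (forall x y z : G, x <= y -> x + z <= y + z).

(* Gamma \cup {infinity}, encoded as option G with None = infinity. *)
Definition vle (G : porderZmodType) (a b : option G) : bool :=
  match a, b with
  | _, None => true
  | None, Some _ => false
  | Some x, Some y => x <= y
  end.

Definition vadd (G : porderZmodType) (a b : option G) : option G :=
  match a, b with
  | Some x, Some y => Some (x + y)
  | _, _ => None
  end.

Definition vmin (G : porderZmodType) (a b : option G) : option G :=
  if vle a b then a else b.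

(* A valuation on the commutative ring R (nonzero elements may have value
   infinity). *)
Definition valuation (R : comNzRingType) (G : porderZmodType)
    (nu : R -> option G) : Prop :=
  [/\ forall a b, nu (a * b) = vadd (nu a) (nu b),
      forall a b, vle (vmin (nu a) (nu b)) (nu (a + b)),
      nu 1 = Some 0 &
      nu 0 = None].

(* The i-th coefficient f_i of the q-expansion f = sum_i f_i q^i
   (deg f_i < deg q); for monic nonconstant q it is obtained by
   repeated Euclidean division. *)
Definition qcoef (K : fieldType) (q f : {poly K}) (i : nat) : {poly K} :=
  (f %/ q ^+ i) %% q.

(* Since deg q >= 1, the
   q-expansion of f has at most size f terms; the remaining coefficients
   vanish and contribute infinity, which does not affect the minimum. *)
Definition qtrunc (K : fieldType) (G : porderZmodType)
    (nu : {poly K} -> option G) (q : {poly K}) (f : {poly K}) : option G :=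
  foldr (@vmin G) None [seq nu (qcoef q f i * q ^+ i) | i <- iota 0 (size f)].

(* Q^lambda for lambda in N^Q, lambda represented as the finite multiset
   (sequence) m of elements of Q, each q occurring lambda(q) times. *)
Definition qmonomial (K : fieldType) (m : seq {poly K}) : {poly K} :=
  \prod_(q <- m) q.

Definition complete_set (K : fieldType) (G : porderZmodType)
    (nu : {poly K} -> option G) (Q : {poly K} -> Prop) : Prop :=
  forall p : {poly K}, (1 < size p)%N ->
    exists q, [/\ Q q, (size q <= size p)%N & nu p = qtrunc nu q p].

From HB Require Import structures.
From mathcomp Require Import all_boot all_order all_algebra.
From mathcomp Require Import ring.
Import Order.TTheory GRing.Theory Num.Theory.

Set Implicit Arguments.
Unset Strict Implicit.
Unset Printing Implicit Defensive.
Local Open Scope ring_scope.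

(* Always nu_Q <= nu, since nu(p) is bounded below by the minimum of the values
   of the terms of the Q-expansion of p.  For the converse pick, by (2), a Q
   among the polynomials occurring in the representation (3) of p on which
   nu_Q agrees with all of them; nu_Q is multiplicative by (1) and agrees with
   nu on constants, hence on every term a_i Q^lambda_i, so
   nu_Q(p) >= min_i nu(a_i Q^lambda_i) >= nu(p).  If no polynomial occurs, p
   would be constant. *)

Section ExtendedOrder.
Variable G : porderZmodType.
Hypothesis leG_total : forall x y : G, (x <= y) || (y <= x).

Lemma vle_refl (a : option G) : vle a a.
Proof. by case: a => //= a; rewrite lexx. Qed.

Lemma vle_trans (a b c : option G) : vle a b -> vle b c -> vle a c.
Proof. by case: a => [a|]; case: b => [b|]; case: c => [c|] //=; exact: le_trans. Qed.

Lemma vle_anti (a b : option G) : vle a b -> vle b a -> a = b.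
Proof.
case: a => [a|]; case: b => [b|] //= hab hba.
by congr Some; apply/le_anti; rewrite hab hba.
Qed.

Lemma vle_vmin (c a b : option G) : vle c a -> vle c b -> vle c (vmin a b).
Proof. by rewrite /vmin; case: (vle a b). Qed.

Lemma vmin_lel (a b : option G) : vle (vmin a b) a.
Proof.
rewrite /vmin; case: ifP => [_|]; rewrite ?vle_refl //.
case: a => [a|]; case: b => [b|] //= hab.
by move: (leG_total a b); rewrite hab.
Qed.

Lemma vmin_ler (a b : option G) : vle (vmin a b) b.
Proof. by rewrite /vmin; case: ifP => // _; rewrite vle_refl. Qed.

Lemma foldr_vmin_le (s : seq (option G)) a :
  a \in s -> vle (foldr (@vmin G) None s) a.
Proof.
elim: s => //= b s IHs; rewrite inE => /predU1P [->|/IHs]; first exact: vmin_lel.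
exact/vle_trans/vmin_ler.
Qed.

Lemma vle_foldr_vmin (s : seq (option G)) c :
  (forall a, a \in s -> vle c a) -> vle c (foldr (@vmin G) None s).
Proof.
elim: s => [|a s IHs] hs /=; first by case: c {hs}.
apply: vle_vmin; first by apply: hs; rewrite mem_head.
by apply: IHs => b hb; apply: hs; rewrite inE hb orbT.
Qed.

Lemma valuation_sum_ge (R : comNzRingType) (w : R -> option G) (I : Type)
    (s : seq I) (F : I -> R) c :
  valuation w -> (forall i, i \in map F s -> vle c (w i)) ->
  vle c (w (\sum_(i <- s) F i)).
Proof.
case=> _ wD _ w0; elim: s => [|i s IHs] hs; first by rewrite big_nil w0; case: c {hs}.
rewrite big_cons; apply: vle_trans (wD _ _); apply: vle_vmin.
  by apply: hs; rewrite mem_head.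
by apply: IHs => j hj; apply: hs; rewrite inE hj orbT.
Qed.

End ExtendedOrder.

Section Expansion.
Variables (K : fieldType) (q : {poly K}).
Hypothesis size_q_gt1 : (1 < size q)%N.

Lemma qexpansion_trunc (p : {poly K}) (n : nat) :
  p = \sum_(0 <= i < n) qcoef q p i * q ^+ i + (p %/ q ^+ n) * q ^+ n.
Proof.
elim: n => [|n IHn]; first by rewrite big_geq // expr0 divp1 mulr1 add0r.
rewrite big_nat_recr //= {1}IHn [in X in _ = _ + X]exprSr -divp_divl.
by rewrite {1}(divp_eq (p %/ q ^+ n) q) /qcoef; ring.
Qed.

Lemma qexpansion (p : {poly K}) :
  p = \sum_(i <- iota 0 (size p)) qcoef q p i * q ^+ i.
Proof.
rewrite {1}(qexpansion_trunc p (size p)) /index_iota subn0.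
suff -> : p %/ q ^+ size p = 0 by rewrite mul0r addr0.
apply: divp_small.
have q_neq0 : q != 0 by rewrite -size_poly_gt0 (ltn_trans _ size_q_gt1).
have := size_exp q (size p); have : (0 < size (q ^+ size p))%N.
  by rewrite size_poly_gt0 expf_neq0.
case: (size (q ^+ size p)) => // m _ /= ->.
by rewrite ltnS leq_pmull // -subn1 subn_gt0.
Qed.

Variables (G : porderZmodType) (nu : {poly K} -> option G).
Hypothesis nu_val : valuation nu.
Hypothesis leG_total : forall x y : G, (x <= y) || (y <= x).

Lemma qtrunc_le (p : {poly K}) : vle (qtrunc nu q p) (nu p).
Proof.
rewrite [X in nu X]qexpansion; apply: valuation_sum_ge => // a /mapP [i hi ->].
by apply: foldr_vmin_le => //; apply/mapP; exists i.
Qed.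

Lemma qtrunc_polyC (c : K) : qtrunc nu q c%:P = nu c%:P.
Proof.
have [->|c_neq0] := eqVneq c 0; first by rewrite /qtrunc polyC0 size_poly0; case: nu_val.
rewrite /qtrunc size_polyC c_neq0 /= /vmin /qcoef expr0 divp1 mulr1.
by rewrite modp_small ?size_polyC ?c_neq0 //; case: (nu c%:P).
Qed.

Lemma qtrunc_qmonomial (m : seq {poly K}) :
  valuation (qtrunc nu q) -> (forall x, x \in m -> qtrunc nu q x = nu x) ->
  qtrunc nu q (qmonomial m) = nu (qmonomial m).
Proof.
case: nu_val => nuM _ nu1 _ [nuqM _ nuq1 _]; rewrite /qmonomial.
elim: m => [|x m IHm] hm; first by rewrite !big_nil nu1 nuq1.
rewrite !big_cons nuM nuqM hm ?mem_head // IHm // => y hy.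
by apply: hm; rewrite inE hy orbT.
Qed.

Lemma qtrunc_ge_monomial_expansion (p : {poly K}) (terms : seq (K * seq {poly K})) :
  valuation (qtrunc nu q) ->
  p = \sum_(t <- terms) t.1%:P * qmonomial t.2 ->
  (forall t, t \in terms -> forall x, x \in t.2 -> qtrunc nu q x = nu x) ->
  (forall t, t \in terms -> vle (nu p) (nu (t.1%:P * qmonomial t.2))) ->
  vle (nu p) (qtrunc nu q p).
Proof.
move=> nuq_val p_eq nuq_eq terms_ge; rewrite {2}p_eq.
apply: valuation_sum_ge => // a /mapP [t ht ->].
have [nuM _ _ _] := nu_val; have [nuqM _ _ _] := nuq_val.
rewrite nuqM qtrunc_polyC qtrunc_qmonomial //; last exact: nuq_eq.
by rewrite -nuM terms_ge.
Qed.

End Expansion.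

Lemma monomial_expansion_const (K : fieldType) (p : {poly K})
    (terms : seq (K * seq {poly K})) :
  p = \sum_(t <- terms) t.1%:P * qmonomial t.2 ->
  flatten [seq t.2 | t <- terms] = [::] -> (size p <= 1)%N.
Proof.
move=> -> no_factor; suff -> : \sum_(t <- terms) t.1%:P * qmonomial t.2 =
    (\sum_(t <- terms) t.1)%:P by exact: size_polyC_leq1.
rewrite rmorph_sum; apply: eq_big_seq => t ht /=.
case E: t.2 => [|x m]; first by rewrite /qmonomial big_nil mulr1.
suff : x \in flatten [seq t.2 | t <- terms] by rewrite no_factor.
by apply/flatten_mapP; exists t; rewrite // E mem_head.
Qed.

Theorem mainTheorem2 (K : fieldType) (G : porderZmodType)
    (nu : {poly K} -> option G) (Q : {poly K} -> Prop) :
  ordered_group G ->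
  valuation nu ->
  (forall q, Q q -> q \is monic /\ (1 < size q)%N) ->
  (* (1) *)
  (forall q, Q q -> valuation (qtrunc nu q)) ->
  (* (2) *)
  (forall F : seq {poly K}, F != [::] -> (forall q, q \in F -> Q q) ->
     exists2 q, q \in F & forall q', q' \in F -> qtrunc nu q q' = nu q') ->
  (* (3) *)
  (forall p : {poly K},
     exists terms : seq (K * seq {poly K}),
       [/\ p = \sum_(t <- terms) t.1%:P * qmonomial t.2,
           forall t, t \in terms -> forall q, q \in t.2 -> Q q,
           forall t, t \in terms -> vle (nu p) (nu (t.1%:P * qmonomial t.2)) &
           forall t, t \in terms -> forall q, q \in t.2 -> (size q <= size p)%N]) ->
  complete_set nu Q.
Proof.
move=> [leG_total _] nu_val Q_size nuQ_val nuQ_agree Q_span p size_p_gt1.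
have [terms [p_eq terms_Q terms_ge terms_size]] := Q_span p.
set F := flatten [seq t.2 | t <- terms].
have F_Q q : q \in F -> Q q by case/flatten_mapP => t ht; exact: terms_Q.
have F_neq0 : F != [::].
  by apply: contraTneq size_p_gt1 => /(monomial_expansion_const p_eq); rewrite ltnNge => ->.
have [q qF nuq_eq] := nuQ_agree F F_neq0 F_Q.
have [t ht qt] := flatten_mapP qF.
have [_ size_q_gt1] := Q_size q (F_Q q qF).
exists q; split; [exact: F_Q | exact: terms_size t ht q qt |].
apply: vle_anti; last exact: qtrunc_le.
apply: qtrunc_ge_monomial_expansion p_eq _ terms_ge => //; first exact: nuQ_val (F_Q q qF).
by move=> t' ht' x hx; apply: nuq_eq; apply/flatten_mapP; exists t'.
Qed.
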